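(* Let $x$ be a Bertrand D-curve and $x_1$ a Bertrand partner D-curve of $x$. Then: (i) if $x$ is a geodesic curve, the geodesic curvature of $x_1$ is $k_{g_1} = \lambda\tau_g^2(\cos\theta - \lambda\tau_g\sin\theta)\left(\dfrac{ds}{ds_1}\right)^3$; (ii) if $x$ is a principal line, then $k_{g_1} = k_g(1+\lambda k_g)^2\cos\theta\left(\dfrac{ds}{ds_1}\right)^3$.
   Context: For a unit-speed curve $x(s)$ on an oriented surface $S\subset\mathbb{E}^3$, the Darboux frame is $\{T,g,n\}$ ($T$ unit tangent, $n$ unit surface normal along the curve, $g=n\times T$), with $\dot T = k_g g + k_n n$, $\dot g = -k_g T + \tau_g n$, $\dot n = -k_n T - \tau_g g$; $k_g,k_n,\tau_g$ are the geodesic curvature, normal curvature and geodesic torsion. For $x_1(s_1)$ on an oriented surface $S_1$ the analogous objects carry subscript $1$. $x$ is a Bertrand D-curve with Bertrand partner D-curve $x_1$ if there is a correspondence of points such that at corresponding points $g$ coincides with $g_1$; then $x(s)=x_1(s_1)+\lambda g_1(s_1)$ with $\lambda$ a nonzero constant, and $s$ is a function of $s_1$. $\theta$ is the angle between $T$ and $T_1$, oriented so that $T_1=\cos\theta\,T+\sin\theta\,n$, $n_1=-\sin\theta\,T+\cos\theta\,n$. Geodesic means $k_g=0$; principal line means $\tau_g=0$. *)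

From Stdlib Require Import Reals.
From Coquelicot Require Import Coquelicot.
Open Scope R_scope.

Record vec3 := V3 { vx : R; vy : R; vz : R }.

Definition vadd (u v : vec3) : vec3 := V3 (vx u + vx v) (vy u + vy v) (vz u + vz v).
Definition vscale (a : R) (u : vec3) : vec3 := V3 (a * vx u) (a * vy u) (a * vz u).
Definition dot (u v : vec3) : R := vx u * vx v + vy u * vy v + vz u * vz v.
Definition cross (u v : vec3) : vec3 :=
  V3 (vy u * vz v - vz u * vy v) (vz u * vx v - vx u * vz v) (vx u * vy v - vy u * vx v).

Definition vderiv (f : R -> vec3) (s : R) (d : vec3) : Prop :=
  is_derive (fun t => vx (f t)) s (vx d) /\
  is_derive (fun t => vy (f t)) s (vy d) /\
  is_derive (fun t => vz (f t)) s (vz d).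

(* x : I -> E^3 is a unit-speed curve (parameter s ranging over the open set I)
   lying on an oriented surface, with Darboux frame {T, g, n}
   (T unit tangent, n unit surface normal along the curve, g = n x T)
   and geodesic curvature kg, normal curvature kn, geodesic torsion tg:
     x' = T,  T' = kg g + kn n,  g' = -kg T + tg n,  n' = -kn T - tg g. *)
Definition darboux_curve (I : R -> Prop) (x T g n : R -> vec3) (kg kn tg : R -> R) : Prop :=
  open I /\
  forall s, I s ->
    vderiv x s (T s) /\
    dot (T s) (T s) = 1 /\ dot (n s) (n s) = 1 /\ dot (T s) (n s) = 0 /\
    g s = cross (n s) (T s) /\
    vderiv T s (vadd (vscale (kg s) (g s)) (vscale (kn s) (n s))) /\
    vderiv g s (vadd (vscale (- kg s) (T s)) (vscale (tg s) (n s))) /\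
    vderiv n s (vadd (vscale (- kn s) (T s)) (vscale (- tg s) (g s))).

(* x (with Darboux data on I) is a Bertrand D-curve with Bertrand partner
   D-curve x1 (with Darboux data on J): the point correspondence is
   s = phi s1 (phi differentiable), g coincides with g1 at corresponding
   points, and x(s) = x1(s1) + lam g1(s1) with lam a nonzero constant. *)
Definition bertrand_D_pair (I J : R -> Prop) (x g x1 g1 : R -> vec3)
    (phi : R -> R) (lam : R) : Prop :=
  lam <> 0 /\
  forall s1, J s1 ->
    I (phi s1) /\ ex_derive phi s1 /\
    g (phi s1) = g1 s1 /\
    x (phi s1) = vadd (x1 s1) (vscale lam (g1 s1)).

(* theta (as a function of s1) is the oriented angle from T to T1:
   T1 = cos theta T + sin theta n,  n1 = - sin theta T + cos theta n. *)
Definition angle_between (J : R -> Prop) (T n T1 n1 : R -> vec3) (phi theta : R -> R) : Prop :=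
  forall s1, J s1 ->
    T1 s1 = vadd (vscale (cos (theta s1)) (T (phi s1))) (vscale (sin (theta s1)) (n (phi s1))) /\
    n1 s1 = vadd (vscale (- sin (theta s1)) (T (phi s1))) (vscale (cos (theta s1)) (n (phi s1))).

(* Differentiating x(phi s1) = x1(s1) + lam g1(s1) and g(phi s1) = g1(s1) with respect
   to s1, and expressing T1, n1 through T, n by the angle theta, gives two vector
   identities in the orthonormal pair {T, n}.  Comparing coordinates yields
     phi' = c - lam kg phi',   s = - lam tg phi',   kg1 = (kg c - tg s) phi'
   (c = cos theta, s = sin theta), and the two formulas follow by specialising
   kg = 0, resp. tg = 0, and using c^2 + s^2 = 1. *)
From Stdlib Require Import Reals Lra.
From Coquelicot Require Import Coquelicot.
Open Scope R_scope.

Lemma vec3_eq (u v : vec3) : vx u = vx v -> vy u = vy v -> vz u = vz v -> u = v.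
Proof. destruct u, v; simpl; intros -> -> ->; reflexivity. Qed.

Lemma dot_lin_comb (w u v : vec3) (a b : R) :
  dot w (vadd (vscale a u) (vscale b v)) = a * dot w u + b * dot w v.
Proof. unfold dot, vadd, vscale; simpl; ring. Qed.

Lemma orthonormal_coords_unique (u v : vec3) (a b a' b' : R) :
  dot u u = 1 -> dot v v = 1 -> dot u v = 0 ->
  vadd (vscale a u) (vscale b v) = vadd (vscale a' u) (vscale b' v) ->
  a = a' /\ b = b'.
Proof.
  intros Huu Hvv Huv E.
  assert (Hvu : dot v u = 0) by (rewrite <- Huv; unfold dot; ring).
  pose proof (f_equal (dot u) E) as Eu; pose proof (f_equal (dot v) E) as Ev.
  rewrite !dot_lin_comb in Eu, Ev.
  rewrite Huu, Huv in Eu; rewrite Hvv, Hvu in Ev.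
  split; lra.
Qed.

Lemma is_derive_add_scale (f h : R -> R) (s lam a b : R) :
  is_derive f s a -> is_derive h s b ->
  is_derive (fun t => f t + lam * h t) s (a + lam * b).
Proof.
  intros Hf Hh; apply (is_derive_plus f (fun t => lam * h t)); [exact Hf |].
  apply is_derive_scal; exact Hh.
Qed.

Lemma vderiv_add_scale (f h : R -> vec3) (s lam : R) (df dh : vec3) :
  vderiv f s df -> vderiv h s dh ->
  vderiv (fun t => vadd (f t) (vscale lam (h t))) s (vadd df (vscale lam dh)).
Proof.
  intros [fx [fy fz]] [hx [hy hz]].
  split; [| split]; simpl; apply is_derive_add_scale; assumption.
Qed.

Lemma is_derive_reparam_open (J : R -> Prop) (phi X Y : R -> R) (s1 dX dY : R) :
  open J -> J s1 -> (forall t, J t -> X (phi t) = Y t) ->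
  is_derive X (phi s1) dX -> ex_derive phi s1 -> is_derive Y s1 dY ->
  dY = Derive phi s1 * dX.
Proof.
  intros HJ Js HXY HX Hphi HY.
  assert (HY' : is_derive Y s1 (scal (Derive phi s1) dX)).
  { apply (is_derive_ext_loc (fun t => X (phi t))).
    - apply (filter_imp J); [exact HXY | exact (HJ s1 Js)].
    - exact (is_derive_comp X phi s1 dX _ HX (Derive_correct _ _ Hphi)). }
  rewrite <- (is_derive_unique _ _ _ HY), (is_derive_unique _ _ _ HY'); reflexivity.
Qed.

Lemma vderiv_reparam_open (J : R -> Prop) (phi : R -> R) (f h : R -> vec3) (s1 : R)
    (df dh : vec3) :
  open J -> J s1 -> (forall t, J t -> f (phi t) = h t) ->
  vderiv f (phi s1) df -> ex_derive phi s1 -> vderiv h s1 dh ->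
  dh = vscale (Derive phi s1) df.
Proof.
  intros HJ Js Hfh [fx [fy fz]] Hphi [hx [hy hz]].
  apply vec3_eq; simpl;
    eapply (is_derive_reparam_open J phi _ _ s1 _ _ HJ Js); try eassumption;
    intros t Jt; cbv beta; rewrite (Hfh t Jt); reflexivity.
Qed.

Lemma cos_sin_unit (t : R) : cos t * cos t + sin t * sin t = 1.
Proof. rewrite <- (sin2_cos2 t); unfold Rsqr; ring. Qed.

Lemma darboux_relations_solved (c s p k1 t1 kg tg lam : R) :
  c * c + s * s = 1 ->
  p = (1 - lam * k1) * c - lam * t1 * s ->
  0 = (1 - lam * k1) * s + lam * t1 * c ->
  - kg * p = - k1 * c - t1 * s ->
  tg * p = - k1 * s + t1 * c ->
  p = c - lam * kg * p /\ s = - lam * tg * p /\ k1 = (kg * c - tg * s) * p.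
Proof.
  intros Hcs Ep E0 Ekg Etg.
  assert (Hkg : kg * p = k1 * c + t1 * s) by lra.
  repeat split.
  - replace (c - lam * kg * p) with (c - lam * (kg * p)) by ring.
    rewrite Hkg, Ep; ring.
  - replace (- lam * tg * p) with (- lam * (tg * p)) by ring.
    rewrite Etg; lra.
  - replace ((kg * c - tg * s) * p) with (c * (kg * p) - s * (tg * p)) by ring.
    rewrite Hkg, Etg.
    replace k1 with (k1 * (c * c + s * s)) at 1 by (rewrite Hcs; ring); ring.
Qed.

Lemma partner_kg_of_geodesic (c s p k1 kg tg lam : R) :
  c * c + s * s = 1 -> p = c - lam * kg * p -> s = - lam * tg * p ->
  k1 = (kg * c - tg * s) * p -> kg = 0 ->
  k1 = lam * tg ^ 2 * (c - lam * tg * s) * p ^ 3.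
Proof.
  intros Hcs Ep Es -> ->.
  assert (Epc : p = c) by lra; subst p.
  transitivity (lam * tg ^ 2 * c * c * (c * c + s * s)); [rewrite Hcs, Es; ring |].
  rewrite Es; ring.
Qed.

Lemma partner_kg_of_principal (c s p k1 kg tg lam : R) :
  c * c + s * s = 1 -> p = c - lam * kg * p -> s = - lam * tg * p ->
  k1 = (kg * c - tg * s) * p -> tg = 0 ->
  k1 = kg * (1 + lam * kg) ^ 2 * c * p ^ 3.
Proof.
  intros Hcs Ep Es -> ->.
  assert (Es0 : s = 0) by lra; rewrite Es0 in Hcs.
  assert (Ec : p * (1 + lam * kg) = c) by lra.
  transitivity (kg * c * p * (c * c + 0 * 0)); [rewrite Hcs; ring |].
  rewrite <- Ec; ring.
Qed.

Section BertrandDPair.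

Variables (I J : R -> Prop) (x T g n : R -> vec3) (kg kn tg : R -> R)
  (x1 T1 g1 n1 : R -> vec3) (kg1 kn1 tg1 : R -> R) (phi : R -> R) (lam : R)
  (theta : R -> R).

Hypothesis darboux_x : darboux_curve I x T g n kg kn tg.
Hypothesis darboux_x1 : darboux_curve J x1 T1 g1 n1 kg1 kn1 tg1.
Hypothesis bertrand : bertrand_D_pair I J x g x1 g1 phi lam.
Hypothesis angle : angle_between J T n T1 n1 phi theta.

Lemma bertrand_D_darboux_relations (s1 : R) : J s1 ->
  let c := cos (theta s1) in let s := sin (theta s1) in let p := Derive phi s1 in
  p = (1 - lam * kg1 s1) * c - lam * tg1 s1 * s /\
  0 = (1 - lam * kg1 s1) * s + lam * tg1 s1 * c /\
  - kg (phi s1) * p = - kg1 s1 * c - tg1 s1 * s /\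
  tg (phi s1) * p = - kg1 s1 * s + tg1 s1 * c.
Proof.
  intros Js c s p.
  destruct darboux_x as [_ DI]; destruct darboux_x1 as [HJ DJ].
  destruct bertrand as [_ BP].
  destruct (BP s1 Js) as [Iphi [Hphi _]].
  destruct (DI (phi s1) Iphi) as [dx [HTT [Hnn [HTn [_ [_ [dg _]]]]]]].
  destruct (DJ s1 Js) as [dx1 [_ [_ [_ [_ [_ [dg1 _]]]]]]].
  destruct (angle s1 Js) as [ET1 En1].
  pose proof (vderiv_reparam_open J phi x _ s1 _ _ HJ Js
    (fun t Jt => proj2 (proj2 (proj2 (BP t Jt)))) dx Hphi
    (vderiv_add_scale _ _ _ lam _ _ dx1 dg1)) as Ex.
  pose proof (vderiv_reparam_open J phi g g1 s1 _ _ HJ Js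
    (fun t Jt => proj1 (proj2 (proj2 (BP t Jt)))) dg Hphi dg1) as Eg.
  rewrite ET1, En1 in Ex, Eg.
  fold c s p in Ex, Eg.
  set (Tp := T (phi s1)) in *; set (np := n (phi s1)) in *.
  assert (Hx : vadd (vscale p Tp) (vscale 0 np) =
    vadd (vscale ((1 - lam * kg1 s1) * c - lam * tg1 s1 * s) Tp)
         (vscale ((1 - lam * kg1 s1) * s + lam * tg1 s1 * c) np)).
  { apply vec3_eq; [apply (f_equal vx) in Ex | apply (f_equal vy) in Ex
      | apply (f_equal vz) in Ex]; simpl in Ex |- *; lra. }
  assert (Hg : vadd (vscale (- kg (phi s1) * p) Tp) (vscale (tg (phi s1) * p) np) =
    vadd (vscale (- kg1 s1 * c - tg1 s1 * s) Tp) (vscale (- kg1 s1 * s + tg1 s1 * c) np)).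
  { apply vec3_eq; [apply (f_equal vx) in Eg | apply (f_equal vy) in Eg
      | apply (f_equal vz) in Eg]; simpl in Eg |- *; lra. }
  destruct (orthonormal_coords_unique Tp np _ _ _ _ HTT Hnn HTn Hx).
  destruct (orthonormal_coords_unique Tp np _ _ _ _ HTT Hnn HTn Hg).
  auto.
Qed.

End BertrandDPair.

Theorem corollary3
  (I J : R -> Prop)
  (x T g n : R -> vec3) (kg kn tg : R -> R)
  (x1 T1 g1 n1 : R -> vec3) (kg1 kn1 tg1 : R -> R)
  (phi : R -> R) (lam : R) (theta : R -> R) :
  darboux_curve I x T g n kg kn tg ->
  darboux_curve J x1 T1 g1 n1 kg1 kn1 tg1 ->
  bertrand_D_pair I J x g x1 g1 phi lam ->
  angle_between J T n T1 n1 phi theta ->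
  ((forall s, I s -> kg s = 0) ->
     forall s1, J s1 ->
       kg1 s1 = lam * (tg (phi s1)) ^ 2
                * (cos (theta s1) - lam * tg (phi s1) * sin (theta s1))
                * (Derive phi s1) ^ 3)
  /\
  ((forall s, I s -> tg s = 0) ->
     forall s1, J s1 ->
       kg1 s1 = kg (phi s1) * (1 + lam * kg (phi s1)) ^ 2 * cos (theta s1)
                * (Derive phi s1) ^ 3).
Proof.
  intros HI HJ HB HA.
  assert (solved : forall s1, J s1 ->
    let c := cos (theta s1) in let s := sin (theta s1) in let p := Derive phi s1 in
    p = c - lam * kg (phi s1) * p /\ s = - lam * tg (phi s1) * p /\
    kg1 s1 = (kg (phi s1) * c - tg (phi s1) * s) * p).
  { intros s1 Js c s p.
    destruct (bertrand_D_darboux_relations I J x T g n kg kn tg x1 T1 g1 n1 kg1 kn1 tg1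
                phi lam theta HI HJ HB HA s1 Js) as (Ep & E0 & Ekg & Etg).
    apply (darboux_relations_solved c s p (kg1 s1) (tg1 s1)); try assumption.
    apply cos_sin_unit. }
  split; intros Hcase s1 Js; destruct (solved s1 Js) as (Ep & Es & Ek).
  - apply (partner_kg_of_geodesic _ _ _ _ _ _ _ (cos_sin_unit _) Ep Es Ek).
    apply Hcase, HB, Js.
  - apply (partner_kg_of_principal _ _ _ _ _ _ _ (cos_sin_unit _) Ep Es Ek).
    apply Hcase, HB, Js.
Qed.
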